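(* For any increment arrays $\underline{t}$ and $\underline{u}$ for $n$ agents, \[\bigcup_{i=1}^{n}\{C(i,\underline{t})\}\cap\bigcup_{i=1}^{n}\{C(i,\underline{u})\}\neq\varnothing\iff\underline{t}\approx\underline{u},\] and \[\bigcup_{i=1}^{n}\{C(i,\underline{t})\}=\bigcup_{i=1}^{n}\{C(i,\underline{u})\}\iff\underline{t}\approx\underline{u}.\]
   Context: Agent identifiers are $\{1,\ldots,n\}$, arithmetic on identifiers is modulo $n$ with representatives in $\{1,\ldots,n\}$ (a value $0$ is replaced by $n$). An increment array (IA) of size $s$ ($1\le s\le n$) for $n$ agents is a tuple $\underline{t}=\langle t_0,\ldots,t_{s-1}\rangle$ of non-negative integers with $\sum t_i=n-s$. Cumulative increments: $\varphi_1=0$, $\varphi_i=\sum_{k=0}^{i-2}(t_k+1)$ for $2\le i\le s+1$. The coalition generated from $x$ is $C(x,\underline{t})=\{x\}\cup\bigcup_{i=2}^{s}\{(x+\varphi_i)\bmod n\}$ (residues in $\{1,\ldots,n\}$). Two IAs are equivalent, $\underline{t}\approx\underline{u}$, if they have the same size $s$ and $\underline{u}$ is a circular shift of $\underline{t}$: there is $0\le k\le s-1$ with $\langle u_0,\ldots,u_{s-1}\rangle=\langle t_k,\ldots,t_{s-1},t_0,\ldots,t_{k-1}\rangle$. *)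

From mathcomp Require Import all_boot.
Set Implicit Arguments. Unset Strict Implicit. Unset Printing Implicit Defensive.

(* Agents are 1..n, represented inside 'I_n.+1 (value 0 unused). *)

Definition res (n x : nat) : nat := if x %% n == 0 then n else x %% n.

Definition is_IA (n : nat) (t : seq nat) : Prop :=
  1 <= size t <= n /\ sumn t = n - size t.

Definition phi (t : seq nat) (i : nat) : nat :=
  \sum_(0 <= k < i.-1) (nth 0 t k).+1.

Definition coalition (n : nat) (t : seq nat) (x : nat) : {set 'I_n.+1} :=
  [set a : 'I_n.+1 | (val a == res n x)
      || [exists i : 'I_(size t).+1, (2 <= i) && (val a == res n (x + phi t i))]].

Definition coalitions (n : nat) (t : seq nat) : {set {set 'I_n.+1}} :=
  [set coalition n t i | i : 'I_n.+1 & 1 <= val i].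

Definition IA_equiv (t u : seq nat) : Prop :=
  size t = size u /\ exists k, k < size t /\ u = rot k t.

From mathcomp Require Import all_boot zify.
Set Implicit Arguments. Unset Strict Implicit. Unset Printing Implicit Defensive.

(** Modulo n, the coalition C(x, t) is the translate x + P(t) of the set P(t)
   of partial sums 0 = p_0 < p_1 < ... < p_s = n of the t_k + 1.  Rotating t
   by k translates P(t) by -p_k, so equivalent arrays generate the same family.
   Conversely, if C(x, t) = C(y, u) then y lies in C(x, t), i.e. y = x + p_k
   (mod n) for some k < s, whence C(y, rot k t) = C(x, t) = C(y, u); and since
   the strictly increasing list of partial sums in [0, n] is determined by its
   residues modulo n, rot k t = u. *)

Definition span (t : seq nat) : nat := sumn t + size t.

Lemma span_cons c t : span (c :: t) = c.+1 + span t.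
Proof. rewrite /span /=; lia. Qed.

Lemma span_cat a b : span (a ++ b) = span a + span b.
Proof. rewrite /span sumn_cat size_cat; lia. Qed.

Lemma span_take_drop k t : span (take k t) + span (drop k t) = span t.
Proof. by rewrite -span_cat cat_take_drop. Qed.

Lemma span_rot k t : span (rot k t) = span t.
Proof. by rewrite /rot span_cat addnC span_take_drop. Qed.

Lemma span_take_le k t : span (take k t) <= span t.
Proof. by rewrite -(span_take_drop k t) leq_addr. Qed.

Lemma IA_span n t : is_IA n t -> 0 < n /\ span t = n.
Proof. by rewrite /span => -[/andP[? ?] ?]; split; lia. Qed.

Lemma phi_span_take t k : k <= size t -> phi t k.+1 = span (take k t).
Proof.
rewrite /phi /=; elim: t k => [|c t IH] [|k] //= k_le.
- by rewrite big_geq.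
- by rewrite big_geq.
- by rewrite big_nat_recl //= IH // span_cons.
Qed.

Fixpoint psums (t : seq nat) : seq nat :=
  if t is c :: t' then 0 :: map (addn c.+1) (psums t') else [:: 0].

Lemma psums_cons c t : psums (c :: t) = 0 :: map (addn c.+1) (psums t).
Proof. by []. Qed.

Lemma psumsE t : psums t = [seq span (take k t) | k <- iota 0 (size t).+1].
Proof.
elim: t => // c t IH.
have -> : iota 0 (size (c :: t)).+1 = 0 :: map (addn 1) (iota 0 (size t).+1).
  by rewrite -iotaDl.
rewrite psums_cons IH map_cons -!map_comp.
by congr (_ :: _); apply: eq_map => k /=; rewrite span_cons.
Qed.

Lemma mem0_psums t : 0 \in psums t.
Proof. by case: t. Qed.

Lemma mem_span_psums t : span t \in psums t.
Proof.
by rewrite psumsE; apply/mapP; exists (size t); rewrite ?take_size ?mem_iota ?ltnSn.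
Qed.

Lemma psums_le_span t q : q \in psums t -> q <= span t.
Proof. by rewrite psumsE => /mapP[k _ ->]; apply: span_take_le. Qed.

Lemma mem_psums_cat a b : psums (a ++ b) =i psums a ++ map (addn (span a)) (psums b).
Proof.
elim: a => [|c a IH] q /=.
  by rewrite map_id_in // inE; case: eqP => // ->; rewrite mem0_psums.
rewrite !inE (eq_mem_map _ IH) map_cat -map_comp span_cons.
by congr (_ || (_ \in _ ++ _)); apply: eq_map => p /=; rewrite addnA.
Qed.

Lemma sorted_psums t : sorted ltn (psums t).
Proof.
elim: t => //= c t; case: (psums t) => //= q s IH.
by apply: homo_path IH => x y /=; rewrite ltn_add2l.
Qed.

Lemma psums_cons0 t : psums t = 0 :: behead (psums t).
Proof. by case: t. Qed.

Lemma psums_inj : injective psums.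
Proof.
elim=> [|c t IH] [|b u] //=.
- by rewrite (psums_cons0 u).
- by rewrite (psums_cons0 t).
rewrite (psums_cons0 t) (psums_cons0 u) /= !addn0 => -[<-].
move=> /(inj_map (@addnI c.+1)) eq_tail.
by rewrite (IH u) // (psums_cons0 t) (psums_cons0 u) eq_tail.
Qed.

Lemma res_mod n z : res n z = z %[mod n].
Proof. by rewrite /res; case: eqP => [->|_]; rewrite ?modnn ?modn_mod. Qed.

Lemma res_gt0 n z : 0 < n -> 0 < res n z.
Proof. by move=> n_gt0; rewrite /res; case: eqP => // /eqP; rewrite lt0n. Qed.

Lemma res_lt n z : 0 < n -> res n z < n.+1.
Proof. by rewrite /res ltnS; case: eqP => // _ /ltn_pmod/ltnW->. Qed.

Lemma eq_res n z a : 0 < a <= n -> (a == res n z) = (z == a %[mod n]).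
Proof.
case/andP=> a_gt0 a_le; apply/eqP/eqP => [-> | z_a]; first by rewrite res_mod.
rewrite /res z_a; case: ltngtP a_le => // [a_lt | ->] _; last by rewrite modnn.
by rewrite modn_small //; case: eqP => // a0; rewrite a0 in a_gt0.
Qed.

Section Coalitions.

Variable n : nat.
Hypothesis n_gt0 : 0 < n.

Definition hits (x : nat) (t : seq nat) (r : nat) : bool :=
  has (fun q => x + q == r %[mod n]) (psums t).

Lemma hits_self x t : hits x t x.
Proof. by apply/hasP; exists 0; rewrite ?mem0_psums ?addn0. Qed.

Lemma hits_modl x y t r : x = y %[mod n] -> hits x t r = hits y t r.
Proof. by move=> eq_xy; apply: eq_has => q /=; rewrite -modnDml eq_xy modnDml. Qed.

Lemma hits_modr x t r r' : r = r' %[mod n] -> hits x t r = hits x t r'.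
Proof. by move=> eq_r; rewrite /hits eq_r. Qed.

Lemma hits_cat x a b r : hits x (a ++ b) r = hits x a r || hits (x + span a) b r.
Proof.
rewrite /hits (eq_has_r (mem_psums_cat a b)) has_cat has_map.
by congr (_ || _); apply: eq_has => q /=; rewrite addnA.
Qed.

Lemma hits_catC x a b r : span a + span b = n ->
  hits x (b ++ a) r = hits (x + span b) (a ++ b) r.
Proof.
move=> span_ab; rewrite !hits_cat orbC; congr orb.
by apply: hits_modl; rewrite -addnA (addnC (span b)) span_ab modnDr.
Qed.

Lemma hits_rot x k t r : span t = n ->
  hits x (rot k t) r = hits (x + span (drop k t)) t r.
Proof. by move=> span_t; rewrite hits_catC ?cat_take_drop // span_take_drop. Qed.

Lemma hitsP t x r : span t = n ->
  reflect (exists2 k, k < size t & x + span (take k t) = r %[mod n]) (hits x t r).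
Proof.
move=> span_t; have size_t : 0 < size t by move: n_gt0; rewrite -span_t; case: (t).
rewrite /hits psumsE has_map; apply: (iffP hasP) => [[k] | [k k_lt eq_r]].
  rewrite mem_iota /= => k_le /eqP eq_r.
  case: (ltngtP k (size t)) => [k_lt | k_gt | k_eq]; first by exists k.
    by rewrite ltnNge -ltnS k_le in k_gt.
  by exists 0; rewrite // -eq_r k_eq take_size span_t modnDr take0 /= addn0.
by exists k; [rewrite mem_iota /= ltnS ltnW | apply/eqP].
Qed.

(* For 2 <= i <= s, phi t i is the partial sum p_(i-1); the remaining partial
   sums p_0 = 0 and p_s = n both yield x itself. *)
Lemma mem_coalition t x (a : 'I_n.+1) : span t = n ->
  (a \in coalition n t x) = (0 < a) && hits x t a.
Proof.
move=> span_t; have a_le : a <= n by rewrite -ltnS.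
rewrite /coalition inE; apply/idP/idP.
- case/orP=> [/eqP-> | /existsP[i /andP[i_ge2 /eqP->]]].
    by rewrite res_gt0 // (hits_modr _ _ (res_mod n x)) hits_self.
  rewrite res_gt0 // (hits_modr _ _ (res_mod n _)); apply/hitsP => //.
  exists i.-1; last by rewrite -phi_span_take ?prednK //; have := ltn_ord i; lia.
  by have := ltn_ord i; lia.
case/andP=> a_gt0 /hitsP-/(_ span_t)[k k_lt].
have a_pos : 0 < a <= n by rewrite a_gt0.
case: (posnP k) => [-> | k_gt0]; first by rewrite take0 /= addn0 eq_res // => /eqP ->.
move=> /eqP eq_a; apply/orP; right; apply/existsP.
exists (Ordinal (k_lt : k.+1 < (size t).+1)).
by rewrite /= ltnS k_gt0 phi_span_take 1?ltnW // eq_res.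
Qed.

Lemma coalition_eqP t u x y : span t = n -> span u = n ->
  coalition n t x = coalition n u y <-> (forall r, hits x t r = hits y u r).
Proof.
move=> span_t span_u; split=> [eq_C r | eq_hits]; last first.
  by apply/setP=> a; rewrite !mem_coalition // eq_hits.
pose a := Ordinal (res_lt r n_gt0).
move/setP/(_ a): eq_C; rewrite !mem_coalition // res_gt0 //=.
by rewrite !(hits_modr _ _ (res_mod n r)).
Qed.

Lemma hits_inj t u y : span t = n -> span u = n ->
  (forall r, hits y t r = hits y u r) -> t = u.
Proof.
move=> span_t span_u eq_hits; apply: psums_inj.
apply: (irr_sorted_eq ltn_trans ltnn); rewrite ?sorted_psums //.
wlog suff sub_tu : t u span_t span_u eq_hits / {subset psums t <= psums u}.
  by move=> q; apply/idP/idP; apply: sub_tu.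
move=> q t_q; have := psums_le_span t_q; rewrite span_t leq_eqVlt.
case/orP=> [/eqP-> | q_lt]; first by rewrite -span_u mem_span_psums.
have /hasP[q' u_q'] : hits y u (y + q) by rewrite -eq_hits; apply/hasP; exists q.
rewrite eqn_modDl; have := psums_le_span u_q'; rewrite span_u leq_eqVlt.
case/orP=> [/eqP-> | q'_lt]; last by rewrite !modn_small // => /eqP <-.
by rewrite modnn modn_small // => /eqP <-; apply: mem0_psums.
Qed.

Lemma coalition_mod t x y : span t = n -> x = y %[mod n] ->
  coalition n t x = coalition n t y.
Proof. by move=> span_t eq_xy; apply/coalition_eqP => // r; apply: hits_modl. Qed.

Lemma coalition_rot t k x : span t = n ->
  coalition n (rot k t) x = coalition n t (x + span (drop k t)).
Proof. by move=> span_t; apply/coalition_eqP; rewrite ?span_rot // => r; apply: hits_rot. Qed.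

Lemma mem_coalitions t x : span t = n -> coalition n t x \in coalitions n t.
Proof.
move=> span_t; apply/imsetP; exists (Ordinal (res_lt x n_gt0)); rewrite ?inE ?res_gt0 //.
by apply: coalition_mod; rewrite //= res_mod.
Qed.

Lemma coalitions_rot t k : span t = n -> coalitions n (rot k t) = coalitions n t.
Proof.
move=> span_t; apply/eqP; rewrite eqEsubset.
apply/andP; split; apply/subsetP=> _ /imsetP[i _ ->].
  by rewrite coalition_rot //; apply: mem_coalitions.
rewrite (@coalition_mod _ i (i + span (take k t) + span (drop k t))) //.
  by rewrite -coalition_rot //; apply: mem_coalitions; rewrite span_rot.
by rewrite -addnA span_take_drop span_t modnDr.
Qed.

Lemma coalition_eq_rot t u x y : span t = n -> span u = n ->
  coalition n t x = coalition n u y -> exists2 k, k < size t & u = rot k t.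
Proof.
move=> span_t span_u eq_C.
have: hits x t y by rewrite ((coalition_eqP _ _ span_t span_u).1 eq_C) hits_self.
case/hitsP=> // k k_lt eq_y.
have span_rot_t : span (rot k t) = n by rewrite span_rot.
exists k => //; apply: (hits_inj (y := y) span_u span_rot_t).
apply/(coalition_eqP _ _ span_u span_rot_t); rewrite coalition_rot // -eq_C.
by apply: coalition_mod; rewrite // -modnDml -eq_y modnDml -addnA span_take_drop span_t modnDr.
Qed.

End Coalitions.

Theorem theorem7 (n : nat) (t u : seq nat) :
  is_IA n t -> is_IA n u ->
  ((coalitions n t :&: coalitions n u != set0) <-> IA_equiv t u) /\
  ((coalitions n t = coalitions n u) <-> IA_equiv t u).
Proof.
move=> /IA_span[n_gt0 span_t] /IA_span[_ span_u].
have equiv_eq : IA_equiv t u -> coalitions n t = coalitions n u.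
  by case=> _ [k [_ ->]]; rewrite coalitions_rot.
have meet_equiv : coalitions n t :&: coalitions n u != set0 -> IA_equiv t u.
  case/set0Pn=> _ /setIP[/imsetP[x _ ->] /imsetP[y _ eq_C]].
  have [k k_lt ->] := coalition_eq_rot n_gt0 span_t span_u eq_C.
  by split; [rewrite size_rot | exists k].
have eq_meet : coalitions n t = coalitions n u -> coalitions n t :&: coalitions n u != set0.
  by move=> ->; rewrite setIid; apply/set0Pn; exists (coalition n u 0); apply: mem_coalitions.
split; split=> //; first by move/equiv_eq/eq_meet.
by move/eq_meet/meet_equiv.
Qed.
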